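(* Let $t\le n-2$, and let $P^{\mathit{fip}}$ be any implementation of the knowledge-based program $\mathbf P^1$ with respect to $\gamma_{\mathit{fip},n,t}$. Consider a failure-free run (no message is lost and every agent is nonfaulty). (a) If at least one agent has initial preference $0$, then all agents decide by round $2$, with each of $P^{\min}$ (in $\gamma_{\min,n,t}$), $P^{\mathit{basic}}$ (in $\gamma_{\mathit{basic},n,t}$) and $P^{\mathit{fip}}$ (in $\gamma_{\mathit{fip},n,t}$). (b) If all agents have initial preference $1$, then all agents decide by round $t+2$ with $P^{\min}$, and by round $2$ with $P^{\mathit{basic}}$ and with $P^{\mathit{fip}}$.
   Context: Agents and runs. There are $n$ agents $\mathit{Agt}=\{1,\ldots,n\}$; time is $m\in\mathbb N$, and round $m+1$ is the step from time $m$ to time $m+1$; agent $i$ decides $v$ in round $k$ if it performs $\mathtt{decide}_i(v)$ at time $k-1$. A failure pattern is a pair $(\mathcal N,F)$ with $\mathcal N\subseteq\mathit{Agt}$ (nonfaulty agents) and $F:\mathbb N\times\mathit{Agt}\times\mathit{Agt}\to\{0,1\}$, $F(m,i,j)=0$ meaning the round-$(m+1)$ message from $i$ to $j$ is lost. $SO(t)$ is the set of failure patterns with $|\mathit{Agt}\setminus\mathcal N|\le t$ and $F(m,i,j)=0\Rightarrow i\notin\mathcal N$. An action protocol maps each agent's local states to actions $\{\mathtt{decide}_i(0),\mathtt{decide}_i(1),\mathtt{noop}\}$; with an initial global state it determines a run: at each time each agent performs its action, sends its messages (lost ones replaced by $\bot$), and updates its state. $\mathcal I,(r,m)\models K_i\varphi$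 iff $\varphi$ holds at all points $(r',m')$ with $r'_i(m')=r_i(m)$; $\bigcirc,\ominus$ are next/previous time. Minimal and basic contexts. $\gamma_{\min,n,t}$: failure model $SO(t)$; local states $\langle\mathit{time}_i,\mathit{init}_i,\mathit{decided}_i,\mathit{rd}_i\rangle$, initial states $\langle0,\mathit{init}_i,\bot,\bot\rangle$; an agent performing $\mathtt{decide}_i(v)$ sends $v$ to every agent, otherwise sends nothing; the transition increments $\mathit{time}_i$, sets $\mathit{decided}_i:=v$ on $\mathtt{decide}_i(v)$, and sets $\mathit{rd}_i$ to $0$ (resp. $1$) if in that round $i$ received $0$ (resp. $1$), else $\bot$. $\gamma_{\mathit{basic},n,t}$: as $\gamma_{\min,n,t}$ but with an extra component $\#1_i\in\{0,\ldots,n\}$ (initially $0$); an agent in state $\langle m,1,\bot,\bot,k\rangle$ performing $\mathtt{noop}$ sends $(\mathit{init},1)$ to every agent; $\#1_i$ is set to the number of $(\mathit{init},1)$ messages received in the round if $\mathit{decided}_i=\bot$ and $i$ receives no message $0$ or $1$ in that round, and to $0$ otherwise. $P^{\min}_i$: if $\mathit{decided}_i\ne\bot$ then $\mathtt{noop}$; else if $\mathit{init}_i=0$ or $\mathit{rd}_i=0$ then $\mathtt{decide}_i(0)$; else if $\mathit{time}_i=t+1$ then $\mathtt{decide}_i(1)$; else $\mathtt{noop}$. $P^{\mathit{basic}}_i$: if $\mathit{decided}_i\ne\bot$ then $\mathtt{noop}$; else if $\mathit{init}_i=0$ or $\mathit{rd}_i=0$ then $\mathtt{decide}_i(0)$;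 else if $\#1_i>n-\mathit{time}_i$ or $\mathit{rd}_i=1$ then $\mathtt{decide}_i(1)$; else $\mathtt{noop}$. Full-information context. $\gamma_{\mathit{fip},n,t}$ has failure model $SO(t)$; each agent's local state consists of its time, its initial preference $\mathit{init}_i$, and the complete record of all messages received; in every round every agent sends its entire local state to every agent regardless of its action. Given a protocol $P$, $\mathcal I_{\gamma_{\mathit{fip},n,t},P}$ is the system of its runs, with $\mathit{decided}_i=v$ true at $(r,m)$ iff $i$ decided $v$ in some round $\le m$ ($\bot$ if not yet), $\mathit{init}_i=v$ read from the state and $i\in\mathcal N$ iff $i\in\mathcal N(r)$. Abbreviations: $\exists v$ is $\bigvee_j\mathit{init}_j=v$; $\mathit{jdecided}_i=v$ is $\mathit{decided}_i=v\wedge\ominus(\mathit{decided}_i=\bot)$; $\mathit{deciding}_i=v$ is $\mathit{decided}_i=\bot\wedge\bigcirc(\mathit{decided}_i=v)$. A knowledge-based program has each $\mathbf P_i$ a nested if-then-else over actions with tests built from formulas $K_i\psi$ and local propositions; $P$ implements it if, in $\mathcal I_{\gamma_{\mathit{fip},n,t},P}$, $P_i(s)$ equals the action obtained by evaluating the tests at $s$, for every arising local state $s$. $E_{\mathcal N}\varphi$ holds at $(r,m)$ iff $K_j\varphi$ holds for all $j\in\mathcal N(r)$; $C_{\mathcal N}\varphi$ iff $E_{\mathcal N}^k\varphi$ for all $k\ge1$; $C_{\mathcal N}(\mathit{t\text{-}faulty}\wedge\varphi)$ abbreviates $\bigvee_{|A|=t}C_{\mathcal N}(\bigwedge_{i\in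 A}\neg(i\in\mathcal N)\wedge\varphi)$; $\mathit{no\text{-}decided}_{\mathcal N}(x)$ abbreviates $\bigwedge_{j\in\mathcal N}\neg(\mathit{decided}_j=x)$. $\mathbf P^1_i$: if $\mathit{decided}_i\ne\bot$ then $\mathtt{noop}$; else if $K_i(C_{\mathcal N}(\mathit{t\text{-}faulty}\wedge\mathit{no\text{-}decided}_{\mathcal N}(1)\wedge\exists0))$ then $\mathtt{decide}_i(0)$; else if $K_i(C_{\mathcal N}(\mathit{t\text{-}faulty}\wedge\mathit{no\text{-}decided}_{\mathcal N}(0)\wedge\exists1))$ then $\mathtt{decide}_i(1)$; else if $\mathit{init}_i=0\vee K_i(\bigvee_{j}\mathit{jdecided}_j=0)$ then $\mathtt{decide}_i(0)$; else if $K_i(\bigwedge_{j}\neg(\mathit{deciding}_j=0))$ then $\mathtt{decide}_i(1)$; else $\mathtt{noop}$. *)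

From mathcomp Require Import all_boot.
Set Implicit Arguments. Unset Strict Implicit. Unset Printing Implicit Defensive.

(* Values {0,1} are encoded as bool: 0 = false, 1 = true.
   Actions: decide_i(v) = Some v, noop = None.
   Agents Agt = {1..n} are encoded as 'I_n. *)
Definition action := option bool.
Definition decide (v : bool) : action := Some v.
Definition noop : action := None.

(* F m i j = false  means the round-(m+1) message from i to j is lost.  *)
Definition SO (n t : nat) (N : {set 'I_n}) (F : nat -> 'I_n -> 'I_n -> bool) : Prop :=
  #|~: N| <= t /\ (forall m i j, F m i j = false -> i \notin N).

Definition F_none (n : nat) : nat -> 'I_n -> 'I_n -> bool := fun _ _ _ => true.

Record mstate := MState { m_time : nat; m_init : bool;
                          m_decided : option bool; m_rd : option bool }.

Definition P_min (t : nat) (s : mstate) : action :=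
  if m_decided s != None then noop
  else if (m_init s == false) || (m_rd s == Some false) then decide false
  else if m_time s == t.+1 then decide true
  else noop.

Definition rd_update (n : nat) (a : 'I_n -> action) (Fm : 'I_n -> 'I_n -> bool)
  (j : 'I_n) : option bool :=
  if [exists i, (a i == Some false) && Fm i j] then Some false
  else if [exists i, (a i == Some true) && Fm i j] then Some true
  else None.

Definition upd_decided (a : action) (d : option bool) : option bool :=
  match a with Some v => Some v | None => d end.

Fixpoint min_run (n t : nat) (init : 'I_n -> bool)
    (F : nat -> 'I_n -> 'I_n -> bool) (m : nat) : 'I_n -> mstate :=
  match m with
  | 0 => fun i => MState 0 (init i) None None
  | m'.+1 =>
      let s := min_run t init F m' in
      let a := fun i => P_min t (s i) in
      fun j => MState (m_time (s j)).+1 (m_init (s j))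
                      (upd_decided (a j) (m_decided (s j)))
                      (rd_update a (F m') j)
  end.

(* agent i decides by round k: it performs some decide action at a time
   m <= k-1 (round m+1 <= k) *)
Definition min_decides_by (n t : nat) (init : 'I_n -> bool)
    (F : nat -> 'I_n -> 'I_n -> bool) (i : 'I_n) (k : nat) : Prop :=
  exists m, m < k /\ P_min t (min_run t init F m i) != noop.

Record bstate := BState { b_time : nat; b_init : bool;
                          b_decided : option bool; b_rd : option bool;
                          b_cnt1 : nat }.

Definition P_basic (n : nat) (s : bstate) : action :=
  if b_decided s != None then noop
  else if (b_init s == false) || (b_rd s == Some false) then decide false
  else if (n < b_time s + b_cnt1 s) || (b_rd s == Some true) then decide true
  else noop.

(* agent in state <m,1,bot,bot,k> performing noop sends (init,1) *)
Definition sends_init1 (s : bstate) (a : action) : bool :=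
  [&& b_init s, b_decided s == None, b_rd s == None & a == None].

Fixpoint basic_run (n : nat) (init : 'I_n -> bool)
    (F : nat -> 'I_n -> 'I_n -> bool) (m : nat) : 'I_n -> bstate :=
  match m with
  | 0 => fun i => BState 0 (init i) None None 0
  | m'.+1 =>
      let s := basic_run init F m' in
      let a := fun i => P_basic n (s i) in
      fun j =>
        let d' := upd_decided (a j) (b_decided (s j)) in
        let got01 := [exists i, (a i != None) && F m' i j] in
        BState (b_time (s j)).+1 (b_init (s j)) d' (rd_update a (F m') j)
          (if (d' == None) && ~~ got01
           then #|[set i | sends_init1 (s i) (a i) && F m' i j]|
           else 0)
  end.

Definition basic_decides_by (n : nat) (init : 'I_n -> bool)
    (F : nat -> 'I_n -> 'I_n -> bool) (i : 'I_n) (k : nat) : Prop :=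
  exists m, m < k /\ P_basic n (basic_run init F m i) != noop.

(* A local state: the initial preference, then for each round the list
   (indexed by sender, in the order of enum 'I_n) of received messages,
   None = lost message (bot).   *)
Inductive fview :=
  | FV0 of bool
  | FVS of fview & seq (option fview).

Fixpoint ftime (s : fview) : nat :=
  match s with FV0 _ => 0 | FVS p _ => (ftime p).+1 end.

Record frun (n : nat) := FRun { r_init : 'I_n -> bool;
                                r_N : {set 'I_n};
                                r_F : nat -> 'I_n -> 'I_n -> bool }.

Definition in_sys (n t : nat) (r : frun n) : Prop := SO t (r_N r) (r_F r).

(* local state of agent i at time m in run r (every agent sends its whole
   local state to every agent every round) *)
Fixpoint fstate (n : nat) (r : frun n) (m : nat) : 'I_n -> fview :=
  match m with
  | 0 => fun i => FV0 (r_init r i)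
  | m'.+1 => fun i =>
      FVS (fstate r m' i)
          [seq (if r_F r m' j i then Some (fstate r m' j) else None) | j <- enum 'I_n]
  end.

Definition fformula (n : nat) := frun n -> nat -> Prop.

Section FipLogic.
Variables (n t : nat) (P : 'I_n -> fview -> action).

Definition Kn (i : 'I_n) (phi : fformula n) : fformula n := fun r m =>
  forall r' m', in_sys t r' -> fstate r' m' i = fstate r m i -> phi r' m'.

(* decided_i = v : i decided v in some round <= m *)
Definition decided_is (i : 'I_n) (v : bool) : fformula n := fun r m =>
  exists k, k < m /\ P i (fstate r k i) = Some v.
Definition decided_bot (i : 'I_n) : fformula n := fun r m =>
  forall k, k < m -> P i (fstate r k i) = None.

Definition init_is (j : 'I_n) (v : bool) : fformula n := fun r _ => r_init r j = v.
Definition exists_val (v : bool) : fformula n := fun r m => exists j, init_is j v r m.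
Definition prevf (phi : fformula n) : fformula n := fun r m => 0 < m /\ phi r m.-1.
Definition nextf (phi : fformula n) : fformula n := fun r m => phi r m.+1.

Definition jdecided (j : 'I_n) (v : bool) : fformula n := fun r m =>
  decided_is j v r m /\ prevf (decided_bot j) r m.
Definition deciding (j : 'I_n) (v : bool) : fformula n := fun r m =>
  decided_bot j r m /\ nextf (decided_is j v) r m.

Definition En (phi : fformula n) : fformula n := fun r m =>
  forall j, j \in r_N r -> Kn j phi r m.
Fixpoint Eiter (k : nat) (phi : fformula n) : fformula n :=
  match k with 0 => phi | k'.+1 => En (Eiter k' phi) end.
Definition Cn (phi : fformula n) : fformula n := fun r m =>
  forall k, 0 < k -> Eiter k phi r m.

(* C_N(t-faulty /\ phi) *)
Definition C_tfaulty (phi : fformula n) : fformula n := fun r m =>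
  exists A : {set 'I_n}, #|A| = t /\
    Cn (fun r' m' => (forall i, i \in A -> i \notin r_N r') /\ phi r' m') r m.

Definition no_decided (x : bool) : fformula n := fun r m =>
  forall j, j \in r_N r -> ~ decided_is j x r m.

Definition andf (phi psi : fformula n) : fformula n := fun r m => phi r m /\ psi r m.

Definition test1 (i : 'I_n) : fformula n :=
  Kn i (C_tfaulty (andf (no_decided true) (exists_val false))).
Definition test2 (i : 'I_n) : fformula n :=
  Kn i (C_tfaulty (andf (no_decided false) (exists_val true))).
Definition test3 (i : 'I_n) : fformula n := fun r m =>
  init_is i false r m \/ Kn i (fun r' m' => exists j, jdecided j false r' m') r m.
Definition test4 (i : 'I_n) : fformula n :=
  Kn i (fun r' m' => forall j, ~ deciding j false r' m').

(* P implements P^1 w.r.t. gamma_{fip,n,t}: at every point of the system,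
   P's action equals the action selected by the nested if-then-else. *)
Definition implements_P1 : Prop :=
  forall (i : 'I_n) (r : frun n) (m : nat), in_sys t r ->
    let a := P i (fstate r m i) in
    let T1 := test1 i r m in let T2 := test2 i r m in
    let T3 := test3 i r m in let T4 := test4 i r m in
    let nd := decided_bot i r m in
    (~ nd -> a = noop) /\
    (nd -> T1 -> a = decide false) /\
    (nd -> ~ T1 -> T2 -> a = decide true) /\
    (nd -> ~ T1 -> ~ T2 -> T3 -> a = decide false) /\
    (nd -> ~ T1 -> ~ T2 -> ~ T3 -> T4 -> a = decide true) /\
    (nd -> ~ T1 -> ~ T2 -> ~ T3 -> ~ T4 -> a = noop).

End FipLogic.

Definition fip_decides_by (n : nat) (P : 'I_n -> fview -> action) (r : frun n)
    (i : 'I_n) (k : nat) : Prop :=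
  exists m, m < k /\ P i (fstate r m i) <> noop.

From mathcomp Require Import all_boot.
From Stdlib Require Import Classical.
Set Implicit Arguments. Unset Strict Implicit.

(* For P^min and P^basic the claims are direct computations of the first
   rounds of the run: an agent with preference 0 decides 0 at time 0, so in
   round 1 everybody receives a 0 and decides 0 at time 1; with preferences
   all 1, P^min stays silent until time t+1, while under P^basic every agent
   receives n messages (init,1) in round 1 and, since n > n - 1, decides 1.

   Epistemic facts are used through two
   observations: knowledge and common knowledge among the nonfaulty agents
   are truthful (there is a nonfaulty agent since t < n), and in the
   failure-free run an agent's view at time 1 reveals every initial
   preference.  Then (a) an agent with preference 0 decides 0 at time 0, so
   at time 1 everybody knows some agent just decided 0 (test 3); and
   (b) with preferences all 1 nobody ever decides 0, which every agent knows
   at time 1 (test 4). *)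

Lemma rd_update_received0 (n : nat) (a : 'I_n -> action)
    (Fm : 'I_n -> 'I_n -> bool) (i j : 'I_n) :
  a i = Some false -> Fm i j -> rd_update a Fm j = Some false.
Proof.
by move=> ai Fij; rewrite /rd_update ifT //; apply/existsP; exists i; rewrite ai Fij.
Qed.

Lemma rd_update_silent (n : nat) (a : 'I_n -> action)
    (Fm : 'I_n -> 'I_n -> bool) (j : 'I_n) :
  (forall i, a i = None) -> rd_update a Fm j = None.
Proof.
by move=> a0; rewrite /rd_update !ifF //; apply/existsP => -[i]; rewrite a0.
Qed.

(* With some preference 0, under P^min every agent decides by round 2:
   those with preference 0 at time 0, the others on receiving a 0 in
   round 1. *)
Lemma min_decides_early (n t : nat) (init : 'I_n -> bool) (i0 : 'I_n) :
  init i0 = false -> forall i, min_decides_by t init (@F_none n) i 2.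
Proof.
move=> init0 i; case init_i : (init i); last first.
  by exists 0; split => //; rewrite /P_min /= init_i.
exists 1; split => //=.
rewrite (@rd_update_received0 _ _ _ i0) //; last by rewrite /P_min /= init0.
by rewrite /P_min /= init_i.
Qed.

Lemma min_run_all1 (n t : nat) (init : 'I_n -> bool) :
  (forall i, init i = true) ->
  forall m, m <= t.+1 -> forall i, min_run t init (@F_none n) m i = MState m true None None.
Proof.
move=> all1; elim=> [|m IH] lt_m i /=; first by rewrite all1.
have le_m := ltnW lt_m.
have silent j : P_min t (min_run t init (@F_none n) m j) = None.
  by rewrite IH // /P_min /= (ltn_eqF lt_m).
by rewrite silent IH // rd_update_silent.
Qed.

Lemma min_decides_all1 (n t : nat) (init : 'I_n -> bool) :
  (forall i, init i = true) -> forall i, min_decides_by t init (@F_none n) i (t + 2).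
Proof.
move=> all1 i; exists t.+1; split; first by rewrite addn2.
by rewrite min_run_all1 // /P_min /= eqxx.
Qed.

(* The same holds for P^basic: a 0 received in round 1 triggers a decision. *)
Lemma basic_decides_early (n : nat) (init : 'I_n -> bool) (i0 : 'I_n) :
  init i0 = false -> forall i, basic_decides_by init (@F_none n) i 2.
Proof.
move=> init0 i; case init_i : (init i); last first.
  by exists 0; split => //; rewrite /P_basic /= init_i.
exists 1; split => //=.
rewrite (@rd_update_received0 _ _ _ i0) //; last by rewrite /P_basic /= init0.
by rewrite /P_basic /= init_i.
Qed.

(* With all preferences 1, under P^basic nobody decides at time 0, so in
   round 1 every agent receives (init,1) from all n agents; as n > n - 1 it
   decides 1. *)
Lemma basic_decides_all1 (n : nat) (init : 'I_n -> bool) :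
  (forall i, init i = true) -> forall i, basic_decides_by init (@F_none n) i 2.
Proof.
move=> all1 i; exists 1; split => //.
have silent j : P_basic n (basic_run init (@F_none n) 0 j) = None.
  by rewrite /P_basic /= all1.
have no_value : [exists j, (P_basic n (basic_run init (@F_none n) 0 j) != None)
                           && F_none 0 j i] = false.
  by apply/existsP => -[j]; rewrite silent.
have all_init1 : #|[set j | sends_init1 (basic_run init (@F_none n) 0 j)
                     (P_basic n (basic_run init (@F_none n) 0 j)) && F_none 0 j i]| = n.
  rewrite -[RHS]card_ord -cardsT; apply: eq_card => j.
  by rewrite !inE /sends_init1 silent /= all1.
rewrite /= {1}/P_basic /= silent /= no_value all_init1 rd_update_silent //.
by rewrite /P_basic /= all1 add1n ltnSn.
Qed.

Lemma ftime_fstate (n : nat) (r : frun n) (m : nat) (i : 'I_n) :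
  ftime (fstate r m i) = m.
Proof. by elim: m i => //= m IH i; rewrite IH. Qed.

Lemma failure_free_in_sys (n t : nat) (init : 'I_n -> bool) :
  in_sys t (FRun init setT (@F_none n)).
Proof. by split => //=; rewrite setCT cards0. Qed.

Lemma nonfaulty_exists (n t : nat) (r : frun n) :
  in_sys t r -> t < n -> exists j, j \in r_N r.
Proof.
move=> [card_faulty _] lt_tn; apply/set0Pn/eqP => N0.
move: card_faulty; rewrite N0 setC0 cardsT card_ord.
by move/(leq_trans lt_tn); rewrite ltnn.
Qed.

(* Knowledge is truthful: the actual point is indistinguishable from itself. *)
Lemma Kn_truth (n t : nat) (i : 'I_n) (phi : fformula n) (r : frun n) (m : nat) :
  in_sys t r -> Kn t i phi r m -> phi r m.
Proof. by move=> r_sys; apply. Qed.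

Lemma C_tfaulty_truth (n t : nat) (phi : fformula n) (r : frun n) (m : nat) :
  in_sys t r -> t < n -> C_tfaulty t phi r m -> phi r m.
Proof.
move=> r_sys lt_tn [A [_ CA]]; have [j Nj] := nonfaulty_exists r_sys lt_tn.
by case: (Kn_truth r_sys (CA 1 isT j Nj)).
Qed.

(* In the failure-free run every message of round 1 arrives, so an agent
   whose view matches its time-1 view there is at time 1 of a run with the
   same initial preferences. *)
Lemma failure_free_view1 (n : nat) (init : 'I_n -> bool) (r : frun n)
    (m : nat) (i : 'I_n) :
  fstate r m i = fstate (FRun init setT (@F_none n)) 1 i ->
  m = 1 /\ forall j, r_init r j = init j.
Proof.
move=> same_view.
have m1 : m = 1 by rewrite -(ftime_fstate r m i) same_view ftime_fstate.
split => //; subst m; move: same_view => /= [_] /eq_in_map same_msgs j.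
have := same_msgs j; rewrite mem_enum => /(_ isT).
by case: (r_F r 0 j i) => //= -[->].
Qed.

Section ImplementationsOfP1.
Variables (n t : nat) (P : 'I_n -> fview -> action).
Hypothesis P_impl : implements_P1 t P.
Hypothesis lt_tn : t < n.

Lemma P1_decides0 (i : 'I_n) (r : frun n) (m : nat) :
  in_sys t r -> decided_bot P i r m -> ~ test2 t P i r m -> test3 t P i r m ->
  P i (fstate r m i) = Some false.
Proof.
move=> r_sys nd T2 T3; have /= [_ [H1 [_ [H3 _]]]] := @P_impl i r m r_sys.
by case: (classic (test1 t P i r m)) => T1; [apply: H1 | apply: H3].
Qed.

Lemma P1_decides (i : 'I_n) (r : frun n) (m : nat) :
  in_sys t r -> decided_bot P i r m -> test3 t P i r m \/ test4 t P i r m ->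
  P i (fstate r m i) <> noop.
Proof.
move=> r_sys nd T34; have /= [_ [H1 [H2 [H3 [H4 _]]]]] := @P_impl i r m r_sys.
case: (classic (test1 t P i r m)) => T1; first by rewrite H1.
case: (classic (test2 t P i r m)) => T2; first by rewrite H2.
case: (classic (test3 t P i r m)) => T3; first by rewrite H3.
by case: T34 => // T4; rewrite H4.
Qed.

Lemma P1_not_decides0 (i : 'I_n) (r : frun n) (m : nat) :
  in_sys t r -> ~ test1 t P i r m -> ~ test3 t P i r m ->
  P i (fstate r m i) <> Some false.
Proof.
move=> r_sys T1 T3; have /= [H0 [_ [H2 [_ [H4 H5]]]]] := @P_impl i r m r_sys.
case: (classic (decided_bot P i r m)) => nd; last by rewrite H0.
case: (classic (test2 t P i r m)) => T2; first by rewrite H2.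
case: (classic (test4 t P i r m)) => T4; first by rewrite H4.
by rewrite H5.
Qed.

Lemma test1_exists0 (i : 'I_n) (r : frun n) (m : nat) :
  in_sys t r -> test1 t P i r m -> exists j, r_init r j = false.
Proof. by move=> r_sys /(Kn_truth r_sys) /(C_tfaulty_truth r_sys lt_tn) [_]. Qed.

(* An agent with preference 0 decides 0 at time 0: it cannot know that
   some preference is 1, since all preferences may be 0. *)
Lemma P1_init0_decides0 (i : 'I_n) (r : frun n) :
  in_sys t r -> r_init r i = false -> P i (fstate r 0 i) = Some false.
Proof.
move=> r_sys init_i; apply: P1_decides0 => //; last by left.
set r0 := FRun (fun _ => false) setT (@F_none n).
have r0_sys : in_sys t r0 := failure_free_in_sys t _.
move=> /(_ r0 0 r0_sys); rewrite /= init_i => /(_ erefl).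
by move/(C_tfaulty_truth r0_sys lt_tn) => [_ [j]].
Qed.

Lemma P1_all1_never_decides0 (r : frun n) :
  in_sys t r -> (forall j, r_init r j = true) ->
  forall k (i : 'I_n), P i (fstate r k i) <> Some false.
Proof.
move=> r_sys all1; elim/ltn_ind => k IH i; apply: P1_not_decides0 => //.
  by move/test1_exists0 => /(_ r_sys) [j]; rewrite all1.
case; first by rewrite /init_is all1.
move/(Kn_truth r_sys) => [j [[k' [lt_k'k decided0]] _]].
exact: (IH k' lt_k'k j).
Qed.

Lemma P1_decides_by2 (i : 'I_n) (r : frun n) :
  in_sys t r ->
  (P i (fstate r 0 i) = None -> test3 t P i r 1 \/ test4 t P i r 1) ->
  fip_decides_by P r i 2.
Proof.
move=> r_sys T34; case E : (P i (fstate r 0 i)) => [v|].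
  by exists 0; split => //; rewrite E.
exists 1; split => //; apply: P1_decides => //; last exact: T34.
by case.
Qed.

(* Part (a) for P^1: at time 1 everybody knows that an agent with
   preference 0 has just decided 0 (test 3). *)
Lemma P1_decides_early (init : 'I_n -> bool) (i0 : 'I_n) :
  init i0 = false -> forall i, fip_decides_by P (FRun init setT (@F_none n)) i 2.
Proof.
move=> init0 i; apply: P1_decides_by2 => [|_]; first exact: failure_free_in_sys.
left; right => r m r_sys /failure_free_view1 [-> same_init].
exists i0; split; last by split.
by exists 0; split => //; apply: P1_init0_decides0; rewrite // same_init.
Qed.

(* Part (b) for P^1: at time 1 everybody knows that all preferences are 1,
   hence that nobody is deciding 0 (test 4). *)
Lemma P1_decides_all1 (init : 'I_n -> bool) :
  (forall i, init i = true) -> forall i, fip_decides_by P (FRun init setT (@F_none n)) i 2.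
Proof.
move=> all1 i; apply: P1_decides_by2 => [|_]; first exact: failure_free_in_sys.
right => r m r_sys /failure_free_view1 [-> same_init] j [_ [k [_ decided0]]].
by apply: (P1_all1_never_decides0 r_sys _ decided0) => j'; rewrite same_init.
Qed.

End ImplementationsOfP1.

Theorem mainTheorem14 (n t : nat) (Ht : t + 2 <= n)
  (Pfip : 'I_n -> fview -> action) (Himpl : implements_P1 t Pfip)
  (init : 'I_n -> bool) :
  ((exists i, init i = false) ->
     (forall i, min_decides_by t init (@F_none n) i 2) /\
     (forall i, basic_decides_by init (@F_none n) i 2) /\
     (forall i, fip_decides_by Pfip (FRun init setT (@F_none n)) i 2)) /\
  ((forall i, init i = true) ->
     (forall i, min_decides_by t init (@F_none n) i (t + 2)) /\
     (forall i, basic_decides_by init (@F_none n) i 2) /\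
     (forall i, fip_decides_by Pfip (FRun init setT (@F_none n)) i 2)).
Proof.
have lt_tn : t < n by apply: leq_trans Ht; rewrite addn2 ltnS leqnSn.
split=> [[i0 init0] | all1].
- split; first exact: min_decides_early init0.
  split; first exact: basic_decides_early init0.
  exact: (P1_decides_early Himpl lt_tn init0).
- split; first exact: min_decides_all1.
  split; first exact: basic_decides_all1.
  exact: (P1_decides_all1 Himpl lt_tn all1).
Qed.
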